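(* The family $\{X\in\mathcal{X}_2:X\not\subseteq1+8\mathbb{N}_0\}$ coincides with the set of minimal elements of the poset $\mathcal{X}_2$, and the set $\{X\in\mathcal{X}_2:X\subseteq1+8\mathbb{N}_0\}$ is linearly ordered and coincides with $\{1+2^n\mathbb{N}_0:n\ge3\}$.
   Context: $\mathbb{N}=\{1,2,\dots\}$, $\mathbb{N}_0=\{0\}\cup\mathbb{N}$, $x^{\mathbb{N}}=\{x^k:k\in\mathbb{N}\}$. $\mathcal{X}_2=\{\overline{a^{\mathbb{N}}}:a\in\mathbb{N}\setminus2\mathbb{N},\ a\ne1\}$, closures taken in the $2$-adic topology on $\mathbb{N}\setminus2\mathbb{N}$ (generated by the sets $x+2^m\mathbb{N}_0$, $x,m\in\mathbb{N}$), partially ordered by reverse inclusion: $X\le Y$ iff $Y\subseteq X$. *)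

From Stdlib Require Import Arith.

Definition nset := nat -> Prop.

Definition subset (A B : nset) : Prop := forall x, A x -> B x.

Definition oddN : nset := fun x => Nat.odd x = true.

Definition prog (x m : nat) : nset := fun y => exists k, y = x + 2 ^ m * k.

(* basic open sets of the 2-adic topology on N \ 2N: x + 2^m N_0 with
   x odd (so that the set lies in N \ 2N) and m in N = {1,2,...} *)
Definition basic_open (B : nset) : Prop :=
  exists x m, oddN x /\ 1 <= m /\ B = prog x m.

Definition open2 (U : nset) : Prop :=
  subset U oddN /\
  forall x, U x -> exists B, basic_open B /\ B x /\ subset B U.

Definition closure2 (S : nset) : nset :=
  fun x => oddN x /\ forall U, open2 U -> U x -> exists y, U y /\ S y.

Definition powers (a : nat) : nset := fun y => exists k, 1 <= k /\ y = a ^ k.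

Definition inX2 (X : nset) : Prop :=
  exists a, oddN a /\ a <> 1 /\ X = closure2 (powers a).

Definition le2 (X Y : nset) : Prop := subset Y X.

Definition minimal2 (X : nset) : Prop :=
  inX2 X /\ forall Y, inX2 Y -> le2 Y X -> Y = X.

From Stdlib Require Import Arith.
From Stdlib Require Import ZArith Lia FunctionalExtensionality PropExtensionality.

(* If b - 1 = 2^v u with u odd and v >= 2, then for odd c the orbit c b^N is
   dense in c + 2^v Z_2: an approximation c b^k = x (mod 2^m) that fails modulo
   2^(m+1) is repaired by the factor b^(2^(m-v)), which is 1 + 2^m (mod 2^(m+1)).
   Hence, for odd a > 1, the closure of a^N is 1 + 2^v N_0 when a = 1 (mod 4)
   (take b = a), and when a = 3 (mod 4) it is the union of the classes of 1 and
   of a modulo 2^w, where 2^w exactly divides a^2 - 1 and w >= 3 (take b = a^2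
   and c in {1, a}).  These unions and 1 + 4N_0 are the members of X_2 not
   contained in 1 + 8N_0, and the elements 5, a and 1 + 2^w they contain force
   every larger member of X_2 to coincide with them; the remaining members are
   the chain 1 + 2^n N_0, n >= 3. *)

Local Coercion Z.of_nat : nat >-> Z.
Open Scope Z_scope.

Lemma pow_succ_nat (b : Z) (n : nat) : b ^ S n = b * b ^ n.
Proof. rewrite Nat2Z.inj_succ. apply Z.pow_succ_r. lia. Qed.

Lemma pow_add_nat (b : Z) (m n : nat) : b ^ (m + n)%nat = b ^ m * b ^ n.
Proof. rewrite Nat2Z.inj_add. apply Z.pow_add_r; lia. Qed.

Lemma Z_of_nat_pow2 (n : nat) : Z.of_nat (2 ^ n) = 2 ^ n.
Proof. apply Nat2Z.inj_pow. Qed.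

Lemma pow_double_nat (b : Z) (j : nat) : b ^ (2 * j)%nat = (b * b) ^ j.
Proof. rewrite Nat2Z.inj_mul, Z.pow_mul_r, Z.pow_2_r; lia. Qed.

Lemma pow2_divide_weaken (m n : nat) (z : Z) :
  (m <= n)%nat -> (2 ^ n | z) -> (2 ^ m | z).
Proof.
  intros Hmn Hz. apply (Z.divide_trans _ (2 ^ n)); [|exact Hz].
  exists (2 ^ (n - m)%nat). rewrite <- pow_add_nat, Nat.sub_add by exact Hmn.
  reflexivity.
Qed.

Lemma divide_sub_sym (M x y : Z) : (M | x - y) -> (M | y - x).
Proof.
  intros H. replace (y - x) with (- (x - y)) by ring. now apply Z.divide_opp_r.
Qed.

Lemma divide_sub_trans (M x y z : Z) : (M | x - y) -> (M | y - z) -> (M | x - z).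
Proof.
  intros Hxy Hyz. replace (x - z) with ((x - y) + (y - z)) by ring.
  now apply Z.divide_add_r.
Qed.

Lemma divide_sub1_pow (M b : Z) (k : nat) : (M | b - 1) -> (M | b ^ k - 1).
Proof.
  intros Hb. induction k as [|k IH].
  - exists 0. reflexivity.
  - rewrite pow_succ_nat.
    replace (b * b ^ k - 1) with (b * (b ^ k - 1) + (b - 1)) by ring.
    apply Z.divide_add_r; [apply Z.divide_mul_r|]; assumption.
Qed.

Lemma odd_of_divide2 (z : Z) : (2 | z - 1) -> Z.odd z = true.
Proof. intros [q Hq]. apply Z.odd_spec. exists q. lia. Qed.

Lemma odd_square_sub1 (a : Z) : Z.odd a = true -> (8 | a * a - 1).
Proof.
  intros Ha. apply Z.odd_spec in Ha as [s ->].
  destruct (Z.Even_or_Odd s) as [[r ->]|[r ->]].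
  - exists (r * (2 * r + 1)). ring.
  - exists ((2 * r + 1) * (r + 1)). ring.
Qed.

Lemma divide_square_sub (m : nat) (a b : Z) :
  (2 ^ m | a - b) -> (2 | a + b) -> (2 ^ S m | a * a - b * b).
Proof.
  intros [q Hq] [r Hr]. exists (q * r). rewrite pow_succ_nat.
  replace (a * a - b * b) with ((a - b) * (a + b)) by ring. rewrite Hq, Hr. ring.
Qed.

Definition has_val2 (v : nat) (z : Z) : Prop :=
  exists u, Z.odd u = true /\ z = 2 ^ v * u.

Lemma has_val2_divide (v : nat) (z : Z) : has_val2 v z -> (2 ^ v | z).
Proof. intros [u [_ ->]]. apply Z.divide_factor_l. Qed.

Lemma has_val2_pow2 (v : nat) : has_val2 v (2 ^ v).
Proof. exists 1. split; [reflexivity|ring]. Qed.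

Lemma has_val2_not_divide (v n : nat) (z : Z) :
  has_val2 v z -> (v < n)%nat -> ~ (2 ^ n | z).
Proof.
  intros [u [Hu ->]] Hvn [q Hq].
  rewrite <- (Nat.sub_add (S v) n Hvn), pow_add_nat, pow_succ_nat in Hq.
  assert (Eu : u = 2 * (q * 2 ^ (n - S v)%nat)).
  { apply (Z.mul_reg_l _ _ (2 ^ v)).
    - apply Z.pow_nonzero; lia.
    - rewrite Hq. ring. }
  rewrite Eu, Z.odd_mul in Hu. discriminate.
Qed.

Lemma has_val2_exists (z : Z) : 0 < z -> exists v, has_val2 v z.
Proof.
  intros Hz. generalize Hz.
  apply (Zlt_0_ind (fun z => 0 < z -> exists v, has_val2 v z)); [|lia].
  clear z Hz. intros z IH _ Hz. destruct (Z.Even_or_Odd z) as [[h ->]|Hodd].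
  - destruct (IH h) as [v [u [Hu Hh]]]; [lia|lia|].
    exists (S v), u. split; [exact Hu|]. rewrite pow_succ_nat, Hh. ring.
  - exists 0%nat, z. split; [now apply Z.odd_spec|]. symmetry. apply Z.mul_1_l.
Qed.

Lemma has_val2_square (v : nat) (b : Z) :
  (2 <= v)%nat -> has_val2 v (b - 1) -> has_val2 (S v) (b * b - 1).
Proof.
  intros Hv [u [Hu Hb]]. destruct v as [|v]; [lia|].
  exists (u + 2 ^ v * (u * u)). split.
  - rewrite Z.odd_add_mul_even; [exact Hu|].
    destruct v as [|v]; [lia|]. exists (2 ^ v). apply pow_succ_nat.
  - rewrite !pow_succ_nat in *. replace b with (1 + 2 * 2 ^ v * u) by lia. ring.
Qed.

Lemma has_val2_pow_pow2 (v j : nat) (b : Z) :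
  (2 <= v)%nat -> has_val2 v (b - 1) -> has_val2 (v + j) (b ^ (2 ^ j)%nat - 1).
Proof.
  intros Hv Hb. induction j as [|j IH].
  - rewrite Nat.add_0_r. replace (b ^ (2 ^ 0)%nat) with b; [exact Hb|].
    symmetry. apply Z.pow_1_r.
  - replace (2 ^ S j)%nat with (2 ^ j + 2 ^ j)%nat by (simpl; lia).
    rewrite pow_add_nat, Nat.add_succ_r. apply has_val2_square; [lia|exact IH].
Qed.

Lemma pow2_succ_divide_odd_sum (m : nat) (q r : Z) :
  Z.odd q = true -> Z.odd r = true -> (2 ^ S m | 2 ^ m * (q + r)).
Proof.
  intros Hq Hr.
  assert (Heven : Z.Even (q + r)).
  { apply Z.even_spec. rewrite <- Z.negb_odd, Z.odd_add, Hq, Hr. reflexivity. }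
  destruct Heven as [s ->]. exists s. rewrite pow_succ_nat. ring.
Qed.

Lemma dense_orbit (v : nat) (b c x : Z) :
  (2 <= v)%nat -> has_val2 v (b - 1) -> Z.odd c = true -> (2 ^ v | x - c) ->
  forall m K : nat, exists k : nat, (K <= k)%nat /\ (2 ^ m | c * b ^ k - x).
Proof.
  intros Hv Hb Hc Hx m K.
  assert (Hbk : forall k : nat, (2 ^ v | b ^ k - 1))
    by (intros k; apply divide_sub1_pow, has_val2_divide, Hb).
  induction m as [|m IH].
  - exists K. split; [lia|]. apply Z.divide_1_l.
  - destruct (Nat.le_gt_cases (S m) v) as [Hmv|Hvm].
    + exists K. split; [lia|]. apply (pow2_divide_weaken _ v _ Hmv).
      replace (c * b ^ K - x) with (c * (b ^ K - 1) - (x - c)) by ring.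
      apply Z.divide_sub_r; [apply Z.divide_mul_r, Hbk|exact Hx].
    + destruct IH as [k [Hk [q Hq]]].
      destruct (Z.Even_or_Odd q) as [[r Hr]|Hq_odd].
      * exists k. split; [exact Hk|]. exists r. rewrite Hq, Hr, pow_succ_nat. ring.
      * destruct (has_val2_pow_pow2 v (m - v) b Hv Hb) as [u [Hu Hpow]].
        replace (v + (m - v))%nat with m in Hpow by lia.
        exists (k + 2 ^ (m - v))%nat. split; [lia|].
        assert (Hbk_odd : Z.odd (b ^ k) = true).
        { apply odd_of_divide2, (pow2_divide_weaken 1 v); [lia|apply Hbk]. }
        replace (c * b ^ (k + 2 ^ (m - v))%nat - x)
          with (2 ^ m * (q + c * b ^ k * u)).
        -- apply pow2_succ_divide_odd_sum; [now apply Z.odd_spec|].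
           now rewrite !Z.odd_mul, Hc, Hbk_odd, Hu.
        -- rewrite pow_add_nat.
           replace (b ^ (2 ^ (m - v))%nat) with (1 + 2 ^ m * u) by lia.
           transitivity ((c * b ^ k - x) + 2 ^ m * (c * b ^ k * u)); [rewrite Hq|]; ring.
Qed.

Lemma nset_ext (A B : nset) : (forall x, A x <-> B x) -> A = B.
Proof.
  intros H. extensionality x. apply propositional_extensionality, H.
Qed.

Lemma oddN_divide (x : nat) : oddN x -> (2 | x - 1).
Proof. intros Hx. apply Nat.odd_spec in Hx as [h ->]. exists h. lia. Qed.

Lemma oddN_of_divide (x : nat) : (2 | x - 1) -> oddN x.
Proof. intros [q Hq]. apply Nat.odd_spec. exists (Z.to_nat q). lia. Qed.

Lemma prog_refl (x m : nat) : prog x m x.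
Proof. exists 0%nat. lia. Qed.

Lemma prog_trans (x y z m : nat) : prog x m y -> prog y m z -> prog x m z.
Proof.
  intros [k ->] [l ->]. exists (k + l)%nat. rewrite Nat.mul_add_distr_l. lia.
Qed.

Lemma prog_iff (x m y : nat) : prog x m y <-> (x <= y)%nat /\ (2 ^ m | y - x).
Proof.
  split.
  - intros [k ->]. split; [lia|]. exists k.
    rewrite Nat2Z.inj_add, Nat2Z.inj_mul, Z_of_nat_pow2. ring.
  - intros [Hxy [q Hq]].
    assert (Hpos : 0 < 2 ^ m) by (apply Z.pow_pos_nonneg; lia).
    assert (0 <= q) by nia.
    exists (Z.to_nat q). apply Nat2Z.inj.
    rewrite Nat2Z.inj_add, Nat2Z.inj_mul, Z_of_nat_pow2, Z2Nat.id by assumption.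
    lia.
Qed.

Lemma prog_oddN (x m y : nat) : (1 <= m)%nat -> oddN x -> prog x m y -> oddN y.
Proof.
  intros Hm Hx Hy. apply prog_iff in Hy as [_ Hy]. apply oddN_of_divide.
  replace (y - 1) with ((y - x) + (x - 1)) by ring.
  apply Z.divide_add_r; [|now apply oddN_divide].
  exact (pow2_divide_weaken 1 m _ Hm Hy).
Qed.

Lemma prog_open (x m : nat) : (1 <= m)%nat -> oddN x -> open2 (prog x m).
Proof.
  intros Hm Hx. split.
  - intros y. exact (prog_oddN x m y Hm Hx).
  - intros y Hy. exists (prog y m). split; [|split].
    + exists y, m. repeat split; [exact (prog_oddN x m y Hm Hx Hy)|exact Hm].
    + apply prog_refl.
    + intros z. exact (prog_trans x y z m Hy).
Qed.

Lemma closure2_iff (S : nset) (x : nat) :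
  closure2 S x <->
  oddN x /\ forall m : nat, (1 <= m)%nat -> exists y, S y /\ prog x m y.
Proof.
  split.
  - intros [Hx Hcl]. split; [exact Hx|]. intros m Hm.
    destruct (Hcl (prog x m)) as [y [Hy HSy]];
      [exact (prog_open x m Hm Hx)|apply prog_refl|].
    exists y. split; assumption.
  - intros [Hx Happrox]. split; [exact Hx|]. intros U [_ HU] HUx.
    destruct (HU x HUx) as [B [[x' [m [_ [Hm ->]]]] [Hx' HBU]]].
    destruct (Happrox m Hm) as [y [HSy Hy]].
    exists y. split; [|exact HSy]. exact (HBU y (prog_trans x' x y m Hx' Hy)).
Qed.

Lemma closure2_powers_divide (a x m : nat) :
  closure2 (powers a) x -> (1 <= m)%nat -> exists k : nat, (2 ^ m | a ^ k - x).
Proof.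
  intros Hx Hm. apply closure2_iff in Hx as [_ Hx].
  destruct (Hx m Hm) as [y [[k [_ ->]] Hy]].
  apply prog_iff in Hy as [_ Hy]. exists k. now rewrite <- Nat2Z.inj_pow.
Qed.

Lemma closure2_powers_intro (a x : nat) :
  (1 < a)%nat -> oddN x ->
  (forall m : nat, exists k : nat, (x <= k)%nat /\ (2 ^ m | a ^ k - x)) ->
  closure2 (powers a) x.
Proof.
  intros Ha Hx Happrox. apply closure2_iff. split; [exact Hx|]. intros m _.
  destruct (Happrox m) as [k [Hk Hdiv]].
  assert (Hx0 : x <> 0%nat) by (intros ->; discriminate Hx).
  exists (a ^ k)%nat. split.
  - exists k. split; [lia|reflexivity].
  - apply prog_iff. split.
    + pose proof (Nat.pow_gt_lin_r a k Ha). lia.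
    + now rewrite Nat2Z.inj_pow.
Qed.

Definition odd_class (w : nat) (c : Z) : nset :=
  fun x => oddN x /\ (2 ^ w | x - c).

Definition odd_class_pair (w : nat) (c : Z) : nset :=
  fun x => odd_class w 1 x \/ odd_class w c x.

Lemma odd_class_mono (m n : nat) (c : Z) :
  (m <= n)%nat -> subset (odd_class n c) (odd_class m c).
Proof.
  intros Hmn x [Hx Hdiv]. split; [exact Hx|]. exact (pow2_divide_weaken m n _ Hmn Hdiv).
Qed.

Lemma odd_class_congr (w : nat) (c c' : Z) :
  (2 ^ w | c - c') -> odd_class w c = odd_class w c'.
Proof.
  intros Hcc'. apply nset_ext. intros x. split; intros [Hx Hdiv]; split; auto.
  - exact (divide_sub_trans _ _ _ _ Hdiv Hcc').
  - exact (divide_sub_trans _ _ _ _ Hdiv (divide_sub_sym _ _ _ Hcc')).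
Qed.

Lemma prog_1_eq_odd_class (n : nat) : (1 <= n)%nat -> prog 1 n = odd_class n 1.
Proof.
  intros Hn. apply nset_ext. intros x. split.
  - intros Hx. split; [exact (prog_oddN 1 n x Hn eq_refl Hx)|].
    apply prog_iff in Hx as [_ Hx]. exact Hx.
  - intros [Hx Hdiv]. apply prog_iff. split; [|exact Hdiv].
    destruct x; [discriminate Hx|lia].
Qed.

Lemma odd_class_1_five (v : nat) : odd_class v 1 5%nat <-> (v <= 2)%nat.
Proof.
  assert (H4 : has_val2 2 (5%nat - 1)) by (exists 1; split; reflexivity).
  split.
  - intros [_ Hdiv]. destruct (Nat.le_gt_cases v 2) as [|Hv]; [assumption|].
    exfalso. exact (has_val2_not_divide _ _ _ H4 Hv Hdiv).
  - intros Hv. split; [reflexivity|]. exact (pow2_divide_weaken v 2 _ Hv (has_val2_divide _ _ H4)).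
Qed.

Lemma closure2_powers_eq_class (a v : nat) :
  (1 < a)%nat -> (2 <= v)%nat -> has_val2 v (a - 1) ->
  closure2 (powers a) = odd_class v 1.
Proof.
  intros Ha Hv Hval. apply nset_ext. intros x. split.
  - intros Hx. split; [now apply closure2_iff in Hx as [Hodd _]|].
    destruct (closure2_powers_divide a x v Hx) as [k Hk]; [lia|].
    apply (divide_sub_trans _ _ (a ^ k)); [now apply divide_sub_sym|].
    apply divide_sub1_pow, has_val2_divide, Hval.
  - intros [Hodd Hx]. apply closure2_powers_intro; [exact Ha|exact Hodd|].
    intros m. destruct (dense_orbit v a 1 x Hv Hval eq_refl Hx m x) as [k [Hk Hdiv]].
    exists k. split; [exact Hk|]. now rewrite Z.mul_1_l in Hdiv.
Qed.

Lemma closure2_powers_eq_pair (a w : nat) :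
  (1 < a)%nat -> oddN a -> (2 <= w)%nat -> has_val2 w (a * a - 1) ->
  closure2 (powers a) = odd_class_pair w a.
Proof.
  intros Ha Hodd Hw Hval.
  assert (Hsq : forall j : nat, (2 ^ w | (a * a) ^ j - 1))
    by (intros j; apply divide_sub1_pow, has_val2_divide, Hval).
  apply nset_ext. intros x. split.
  - intros Hx. assert (Hx_odd : oddN x) by now apply closure2_iff in Hx as [? _].
    destruct (closure2_powers_divide a x w Hx) as [k Hk]; [lia|].
    apply divide_sub_sym in Hk.
    destruct (Nat.Even_or_Odd k) as [[j ->]|[j ->]]; rewrite ?Nat.add_1_r in Hk.
    + left. split; [exact Hx_odd|]. rewrite pow_double_nat in Hk.
      exact (divide_sub_trans _ _ _ _ Hk (Hsq j)).
    + right. split; [exact Hx_odd|]. rewrite pow_succ_nat, pow_double_nat in Hk.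
      apply (divide_sub_trans _ _ _ _ Hk).
      replace (a * (a * a) ^ j - a) with (a * ((a * a) ^ j - 1)) by ring.
      apply Z.divide_mul_r, Hsq.
  - intros Hx. assert (Hx_odd : oddN x) by (destruct Hx as [[? _]|[? _]]; assumption).
    apply closure2_powers_intro; [exact Ha|exact Hx_odd|]. intros m.
    destruct Hx as [[_ Hx]|[_ Hx]].
    + destruct (dense_orbit w (a * a) 1 x Hw Hval eq_refl Hx m x) as [k [Hk Hdiv]].
      exists (2 * k)%nat. split; [lia|].
      rewrite Z.mul_1_l in Hdiv. now rewrite pow_double_nat.
    + assert (Ha_odd : Z.odd a = true) by now apply odd_of_divide2, oddN_divide.
      destruct (dense_orbit w (a * a) a x Hw Hval Ha_odd Hx m x) as [k [Hk Hdiv]].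
      exists (S (2 * k)). split; [lia|].
      now rewrite pow_succ_nat, pow_double_nat.
Qed.

Lemma inX2_cases (X : nset) :
  inX2 X ->
  (exists v : nat, (2 <= v)%nat /\ X = odd_class v 1) \/
  (exists a w : nat, oddN a /\ has_val2 1 (a - 1) /\ (3 <= w)%nat /\
                     has_val2 w (a * a - 1) /\ X = odd_class_pair w a).
Proof.
  intros [a [Hodd [Ha1 ->]]].
  assert (Ha : (1 < a)%nat) by (destruct a as [|[|a]]; [discriminate Hodd|lia|lia]).
  destruct (has_val2_exists (a - 1)) as [[|[|v]] Hv]; [lia| | |].
  - exfalso. exact (has_val2_not_divide 0 1 _ Hv ltac:(lia) (oddN_divide a Hodd)).
  - right. destruct (has_val2_exists (a * a - 1)) as [w Hw]; [nia|].
    assert (Hw3 : (3 <= w)%nat).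
    { destruct (Nat.le_gt_cases 3 w) as [|Hw3]; [assumption|exfalso].
      apply (has_val2_not_divide w 3 _ Hw Hw3), odd_square_sub1.
      now apply odd_of_divide2, oddN_divide. }
    exists a, w. repeat split; try assumption.
    apply closure2_powers_eq_pair; [exact Ha|exact Hodd|lia|exact Hw].
  - left. exists (S (S v)). split; [lia|].
    apply closure2_powers_eq_class; [exact Ha|lia|exact Hv].
Qed.

Lemma inX2_odd_class (n : nat) : (2 <= n)%nat -> inX2 (odd_class n 1).
Proof.
  intros Hn. assert (Hpos : (2 ^ n <> 0)%nat) by (apply Nat.pow_nonzero; lia).
  exists (1 + 2 ^ n)%nat. split; [|split; [lia|]].
  - apply (prog_oddN 1 n); [lia|reflexivity|]. exists 1%nat. lia.
  - symmetry. apply closure2_powers_eq_class; [lia|exact Hn|].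
    exists 1. split; [reflexivity|]. rewrite Nat2Z.inj_add, Z_of_nat_pow2. ring.
Qed.

Lemma odd_class_mod4_disjoint (b : Z) (w x : nat) :
  has_val2 1 (b - 1) -> (2 <= w)%nat -> odd_class w b x -> ~ odd_class 2 1 x.
Proof.
  intros Hb Hw [_ Hxb] [_ Hx1]. apply (has_val2_not_divide 1 2 _ Hb); [lia|].
  apply (divide_sub_trans _ _ x); [|exact Hx1].
  apply divide_sub_sym, (pow2_divide_weaken 2 w _ Hw Hxb).
Qed.

Lemma odd_class_2_minimal (Y : nset) :
  inX2 Y -> subset (odd_class 2 1) Y -> Y = odd_class 2 1.
Proof.
  intros HY Hsub.
  assert (H5 : Y 5%nat) by (apply Hsub, odd_class_1_five; lia).
  destruct (inX2_cases Y HY) as [[v [Hv ->]]|[b [w [_ [Hb [Hw [_ ->]]]]]]].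
  - apply odd_class_1_five in H5. f_equal. lia.
  - exfalso. destruct H5 as [H5|H5].
    + apply odd_class_1_five in H5. lia.
    + apply (odd_class_mod4_disjoint b w 5 Hb ltac:(lia) H5), odd_class_1_five. lia.
Qed.

Lemma odd_class_pair_minimal (a w : nat) (Y : nset) :
  oddN a -> has_val2 1 (a - 1) -> (2 <= w)%nat -> has_val2 w (a * a - 1) ->
  inX2 Y -> subset (odd_class_pair w a) Y -> Y = odd_class_pair w a.
Proof.
  intros Ha Ha1 Hw Hval HY Hsub.
  assert (Ha_in : Y a).
  { apply Hsub. right. split; [exact Ha|]. rewrite Z.sub_diag. apply Z.divide_0_r. }
  assert (Hpow_in : Y (1 + 2 ^ w)%nat).
  { apply Hsub. left. rewrite <- prog_1_eq_odd_class by lia. exists 1%nat. lia. }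
  destruct (inX2_cases Y HY) as [[v [Hv ->]]|[b [w' [Hb [Hb1 [Hw' [Hbval ->]]]]]]].
  - exfalso. destruct Ha_in as [_ Hdiv]. exact (has_val2_not_divide 1 v _ Ha1 ltac:(lia) Hdiv).
  - assert (Hab : (2 ^ w' | a - b)).
    { destruct Ha_in as [[_ Hdiv]|[_ Hdiv]]; [exfalso|exact Hdiv].
      exact (has_val2_not_divide 1 w' _ Ha1 ltac:(lia) Hdiv). }
    assert (Hw'w : (w' <= w)%nat).
    { destruct Hpow_in as [[_ Hdiv]|Hin].
      - destruct (Nat.le_gt_cases w' w) as [|Hww']; [assumption|exfalso].
        apply (has_val2_not_divide w w' _ (has_val2_pow2 w) Hww').
        replace (2 ^ w) with ((1 + 2 ^ w)%nat - 1)
          by (rewrite Nat2Z.inj_add, Z_of_nat_pow2; lia).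
        exact Hdiv.
      - exfalso. apply (odd_class_mod4_disjoint b w' _ Hb1 ltac:(lia) Hin).
        rewrite <- prog_1_eq_odd_class by lia. exists (2 ^ (w - 2))%nat.
        rewrite <- Nat.pow_add_r. do 2 f_equal. lia. }
    assert (w' = w) as ->.
    { destruct (Nat.eq_dec w' w) as [|Hne]; [assumption|exfalso].
      apply (has_val2_not_divide w' (S w') _ Hbval); [lia|].
      replace (b * b - 1) with ((a * a - 1) - (a * a - b * b)) by ring.
      apply Z.divide_sub_r.
      - apply (pow2_divide_weaken (S w') w); [lia|exact (has_val2_divide _ _ Hval)].
      - apply divide_square_sub; [exact Hab|].
        replace (a + b) with ((a - 1) + (b - 1) + 2) by ring.
        apply Z.divide_add_r; [apply Z.divide_add_r|apply Z.divide_refl];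
          apply oddN_divide; assumption. }
    unfold odd_class_pair. rewrite (odd_class_congr w b a); [reflexivity|].
    exact (divide_sub_sym _ _ _ Hab).
Qed.

Lemma inX2_sub_prog_1_3 (X : nset) :
  (inX2 X /\ subset X (prog 1 3)) <-> exists n : nat, (3 <= n)%nat /\ X = prog 1 n.
Proof.
  rewrite (prog_1_eq_odd_class 3) by lia. split.
  - intros [HX Hsub].
    destruct (inX2_cases X HX) as [[v [Hv ->]]|[a [w [Ha [Ha1 [Hw [_ ->]]]]]]].
    + assert (Hv3 : (3 <= v)%nat).
      { destruct (Nat.le_gt_cases 3 v) as [|Hv3]; [assumption|exfalso].
        assert (H5 : odd_class 3 1 5%nat) by (apply Hsub, odd_class_1_five; lia).
        apply odd_class_1_five in H5. lia. }
      exists v. split; [exact Hv3|]. symmetry. apply prog_1_eq_odd_class. lia.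
    + exfalso.
      assert (Ha_in : odd_class 3 1 a).
      { apply Hsub. right. split; [exact Ha|]. rewrite Z.sub_diag. apply Z.divide_0_r. }
      destruct Ha_in as [_ Hdiv]. exact (has_val2_not_divide 1 3 _ Ha1 ltac:(lia) Hdiv).
  - intros [n [Hn ->]]. rewrite prog_1_eq_odd_class by lia.
    split; [apply inX2_odd_class; lia|apply odd_class_mono; lia].
Qed.

Lemma minimal2_iff (X : nset) :
  (inX2 X /\ ~ subset X (prog 1 3)) <-> minimal2 X.
Proof.
  split.
  - intros [HX Hnsub]. split; [exact HX|]. intros Y HY HXY.
    destruct (inX2_cases X HX) as [[v [Hv ->]]|[a [w [Ha [Ha1 [Hw [Hval ->]]]]]]].
    + assert (v = 2%nat) as ->.
      { destruct (Nat.eq_dec v 2) as [|Hne]; [assumption|exfalso].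
        apply Hnsub. rewrite prog_1_eq_odd_class by lia. apply odd_class_mono. lia. }
      exact (odd_class_2_minimal Y HY HXY).
    + exact (odd_class_pair_minimal a w Y Ha Ha1 ltac:(lia) Hval HY HXY).
  - intros [HX Hmin]. split; [exact HX|]. intros Hsub.
    destruct (proj1 (inX2_sub_prog_1_3 X) (conj HX Hsub)) as [n [Hn ->]].
    rewrite prog_1_eq_odd_class in Hmin by lia.
    assert (E : odd_class 2 1 = odd_class n 1)
      by (apply Hmin; [apply inX2_odd_class; lia|apply odd_class_mono; lia]).
    assert (H5 : odd_class n 1 5%nat) by (rewrite <- E; apply odd_class_1_five; lia).
    apply odd_class_1_five in H5. lia.
Qed.

Lemma inX2_sub_prog_1_3_total (X Y : nset) :
  inX2 X -> subset X (prog 1 3) -> inX2 Y -> subset Y (prog 1 3) -> le2 X Y \/ le2 Y X.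
Proof.
  intros HX HXsub HY HYsub.
  destruct (proj1 (inX2_sub_prog_1_3 X) (conj HX HXsub)) as [n [Hn ->]].
  destruct (proj1 (inX2_sub_prog_1_3 Y) (conj HY HYsub)) as [n' [Hn' ->]].
  rewrite !prog_1_eq_odd_class by lia.
  destruct (Nat.le_gt_cases n n'); [left|right]; apply odd_class_mono; lia.
Qed.

Close Scope Z_scope.

Theorem lemma4p9 :
  (forall X : nset, (inX2 X /\ ~ subset X (prog 1 3)) <-> minimal2 X) /\
  (forall X Y : nset, inX2 X -> subset X (prog 1 3) ->
                      inX2 Y -> subset Y (prog 1 3) -> le2 X Y \/ le2 Y X) /\
  (forall X : nset, (inX2 X /\ subset X (prog 1 3)) <->
                    exists n, 3 <= n /\ X = prog 1 n).
Proof.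
  split; [exact minimal2_iff|].
  split; [exact inX2_sub_prog_1_3_total|exact inX2_sub_prog_1_3].
Qed.
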